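(* Let $\mathcal C,\mathcal C'\subseteq\mathbb F_2^n$ be binary linear codes, $\sigma\in S_n$, $G$ a reduced basis of $\mathcal C$ (output of Algorithm R for $\mathcal C$ and the error-vector order built from some admissible order) and $G'$ a reduced basis of $\mathcal C'$ (output of Algorithm R for $\mathcal C'$ and the error-vector order built from some admissible order). Put $G^\star=\sigma(G)$. The following are equivalent: (i) $\mathcal C'=\sigma(\mathcal C)$; (ii) $G^\star$ is a reduced basis for $\mathcal C'$, i.e. it is the output of Algorithm R for $\mathcal C'$ and the error-vector order built from some admissible order (some ordering of the variables); (iii) every binomial of $G^\star$ reduces to zero modulo $G'$, and every binomial of $G'$ reduces to zero modulo $G^\star$.
   Context: Binary setting: $[X]$ is the free commutative monoid on $X=\{x_1,\dots,x_n\}$; $\psi(\prod x_i^{\beta_i})=(\beta_i\bmod 2)_i\in\mathbb F_2^n$; a code of dimension $k$ has parity check matrix $H$ ($n\times(n-k)$, code $=\{c:cH=0\}$); syndrome $\xi(w)=\psi(w)H$. $\mathrm{Ind}(w)=\{i:x_i\mid w\}$. For an admissible order $\prec$ the error-vector order is $u<_e w$ iff $|\mathrm{Ind}(u)|<|\mathrm{Ind}(w)|$, or equality and $u\prec w$. For $\sigma\in S_n$: $\sigma((y_i)_i)=(y_{\sigma^{-1}(i)})_i$, $\sigma(\mathcal C)=\{\sigma(c):c\in\mathcal C\}$, on $[X]$ $\sigma$ is the automorphism $x_i\mapsto x_{\sigma(i)}$, acting termwise on binomials. Algorithm R: list $L$ sorted increasingly by $<_e$, set $N$, set $G$ of binomials;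 initially $L=(1)$, $N=G=\emptyset$. While $L\neq\emptyset$: remove the $<_e$-smallest $w$; if $w$ is divisible by the leading word of a binomial in $G$, discard it; otherwise if some $w'\in N$ has $\xi(w')=\xi(w)$, add $w-w'$ to $G$ with leading word $w$; else add $w$ to $N$ and insert all $wx$ ($x\in X$) into $L$. Output $(N,G)$. For a set $B$ of binomials each with a designated leading word (for $\sigma(G)$, the leading word of $\sigma(u-v)$ is $\sigma(u)$), one-step reduction modulo $B$: a non-standard word (some exponent $\ge2$) reduces to its standard form (exponents mod 2); a standard word $w=us$ with $u-u'\in B$ of leading word $u$ reduces to $u's$. Irreducible means no reduction applies. A binomial $u-v$ reduces to zero modulo $B$ if some irreducible word obtained from $u$ by a finite sequence of one-step reductions equals some irreducible word so obtained from $v$. *)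

From HB Require Import structures.
From mathcomp Require Import all_boot all_order all_algebra all_fingroup.
From Stdlib Require Import Relations.
Set Implicit Arguments. Unset Strict Implicit. Unset Printing Implicit Defensive.
Import GRing.Theory.
Local Open Scope ring_scope.

(* Words of the free commutative monoid [X], X = {x_0,...,x_{n-1}}:
   exponent vectors. *)
Definition word (n : nat) := {ffun 'I_n -> nat}.

Definition wone (n : nat) : word n := [ffun _ => 0%N].
Definition wmul (n : nat) (u v : word n) : word n := [ffun i => (u i + v i)%N].
Definition xvar (n : nat) (i : 'I_n) : word n := [ffun j => nat_of_bool (j == i)].
Definition wdvd (n : nat) (u w : word n) : bool := [forall i, (u i <= w i)%N].
Definition wstandard (n : nat) (w : word n) : bool := [forall i, (w i <= 1)%N].
Definition wstd (n : nat) (w : word n) : word n := [ffun i => (w i %% 2)%N].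
Definition Ind (n : nat) (w : word n) : {set 'I_n} := [set i | (0 < w i)%N].

Definition psi (n : nat) (w : word n) : 'rV['F_2]_n := \row_i ((w i)%:R).
Definition syndrome (n m : nat) (H : 'M['F_2]_(n, m)) (w : word n) : 'rV['F_2]_m :=
  psi w *m H.

Definition code (n m : nat) (H : 'M['F_2]_(n, m)) : {set 'rV['F_2]_n} :=
  [set c | c *m H == 0].

Definition admissible (n : nat) (lt : word n -> word n -> bool) : Prop :=
  [/\ (forall u, ~~ lt u u),
      (forall u v w, lt u v -> lt v w -> lt u w),
      (forall u w, u != w -> lt u w || lt w u),
      (forall w, w != wone n -> lt (wone n) w) &
      (forall u w s, lt u w -> lt (wmul u s) (wmul w s))].

Definition evlt (n : nat) (lt : word n -> word n -> bool) (u w : word n) : bool :=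
  (#|Ind u| < #|Ind w|)%N || ((#|Ind u| == #|Ind w|) && lt u w).

(* Binomials u - v represented as pairs (u, v) with leading word u. *)
Definition binom (n : nat) := (word n * word n)%type.

(* States (L, N, G) of Algorithm R. L is treated as a set: removing the
   smallest element w removes all its copies. *)
Definition stateR (n : nat) := (seq (word n) * seq (word n) * seq (binom n))%type.

Definition stepR (n m : nat) (H : 'M['F_2]_(n, m)) (lt : word n -> word n -> bool)
  (s s' : stateR n) : Prop :=
  let: (L, N, G) := s in
  exists w, [/\ w \in L,
    (forall v, v \in L -> v != w -> evlt lt w v) &
    let L0 := [seq v <- L | v != w] in
    if has (fun b : binom n => wdvd b.1 w) G then s' = (L0, N, G)
    else if has (fun w' => syndrome H w' == syndrome H w) N then
      exists2 w', w' \in N /\ syndrome H w' = syndrome H w &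
                  s' = (L0, N, rcons G (w, w'))
    else s' = (L0 ++ [seq wmul w (xvar i) | i <- enum 'I_n], rcons N w, G)].

Definition algR_output (n m : nat) (H : 'M['F_2]_(n, m))
  (lt : word n -> word n -> bool) (N : seq (word n)) (G : seq (binom n)) : Prop :=
  clos_refl_trans _ (stepR H lt) ([:: wone n], [::], [::]) ([::], N, G).

Definition reduced_basis (n m : nat) (H : 'M['F_2]_(n, m))
  (lt : word n -> word n -> bool) (G : seq (binom n)) : Prop :=
  exists N, algR_output H lt N G.

Definition vperm (n : nat) (s : {perm 'I_n}) (c : 'rV['F_2]_n) : 'rV['F_2]_n :=
  \row_j c 0 (s^-1%g j).
Definition codeperm (n : nat) (s : {perm 'I_n}) (C : {set 'rV['F_2]_n}) :=
  [set vperm s c | c in C].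
Definition wperm (n : nat) (s : {perm 'I_n}) (w : word n) : word n :=
  [ffun j => w (s^-1%g j)].
Definition bperm (n : nat) (s : {perm 'I_n}) (b : binom n) : binom n :=
  (wperm s b.1, wperm s b.2).

Definition red1 (n : nat) (B : seq (binom n)) (w w' : word n) : Prop :=
  (~~ wstandard w /\ w' = wstd w) \/
  (wstandard w /\ exists2 b, b \in B & exists s, w = wmul b.1 s /\ w' = wmul b.2 s).

Definition irreducible (n : nat) (B : seq (binom n)) (w : word n) : Prop :=
  forall w', ~ red1 B w w'.

Definition reduces_to_zero (n : nat) (B : seq (binom n)) (b : binom n) : Prop :=
  exists w, [/\ clos_refl_trans _ (red1 B) b.1 w,
                clos_refl_trans _ (red1 B) b.2 w & irreducible B w].

(* Algorithm R keeps an invariant: its binomials u - v have equal syndromes and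
   v below u in the error-vector order, and the words of N have pairwise distinct
   syndromes; read backwards, its run shows that every standard word divisible by
   no leading word lies in N.  Hence reduction modulo the output G terminates, its
   normal forms lie in N, and a binomial reduces to zero modulo G as soon as its two
   words have the same syndrome; in particular every codeword reduces to 1.
   (i) => (ii): renaming the variables by sigma turns a run of Algorithm R for C
   into a run for sigma(C) under the renamed order.
   (ii) => (iii): G* and G' are both reduced bases of C', so their binomials have
   equal C'-syndromes.
   (iii) => (i): syndromes are invariant under reduction, so the binomials of G*
   have equal C'-syndromes; since codewords of C reduce to 1 modulo G, their images
   under sigma reduce to 1 modulo G* and so lie in C'.  Symmetrically, with
   sigma^-1, G' and G, C' is mapped into C. *)

From mathcomp Require Import all_boot all_order all_algebra all_fingroup.
From Stdlib Require Import Relations.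
Set Implicit Arguments. Unset Strict Implicit. Unset Printing Implicit Defensive.
Import GRing.Theory.

Definition syndrome_balanced (n m : nat) (M : 'M['F_2]_(n, m)) (B : seq (binom n)) :=
  forall b, b \in B -> syndrome M b.1 = syndrome M b.2.

Lemma uniq_map_inj_in (T1 T2 : eqType) (f : T1 -> T2) (s : seq T1) :
  uniq (map f s) -> {in s &, injective f}.
Proof.
elim: s => //= a s IH /andP[fa_s us] x y; rewrite !in_cons.
move=> /orP[/eqP->|xs] /orP[/eqP->|ys] e //.
- by move: fa_s; rewrite e (map_f f ys).
- by move: fa_s; rewrite -e (map_f f xs).
- exact: IH.
Qed.

Section Words.
Variable n : nat.
Implicit Types (s u v w : word n) (c : 'rV['F_2]_n).

Lemma wmulC u v : wmul u v = wmul v u.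
Proof. by apply/ffunP=> i; rewrite !ffunE addnC. Qed.

Lemma wmul1w u : wmul (wone n) u = u.
Proof. by apply/ffunP=> i; rewrite !ffunE. Qed.

Lemma wmulw1 u : wmul u (wone n) = u.
Proof. by rewrite wmulC wmul1w. Qed.

Lemma wdvdP u w : reflect (exists s, w = wmul u s) (wdvd u w).
Proof.
apply: (iffP forallP) => [uw|[s ->] i]; last by rewrite ffunE leq_addr.
by exists [ffun i => w i - u i]; apply/ffunP=> i; rewrite !ffunE subnKC.
Qed.

Lemma wdvd_refl u : wdvd u u.
Proof. exact/forallP. Qed.

Lemma wdvd_trans u v w : wdvd u v -> wdvd v w -> wdvd u w.
Proof. by move=> /forallP uv /forallP vw; apply/forallP=> i; apply: leq_trans (uv i) (vw i). Qed.

Lemma wdvdw1 u : wdvd u (wone n) -> u = wone n.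
Proof. by move=> /forallP u1; apply/ffunP=> i; move: (u1 i); rewrite !ffunE leqn0 => /eqP. Qed.

Lemma Ind_wone : Ind (wone n) = set0.
Proof. by apply/setP=> i; rewrite !inE ffunE. Qed.

Lemma Ind_eq0 u : Ind u = set0 -> u = wone n.
Proof.
move=> u0; apply/ffunP=> i; rewrite ffunE.
have : i \notin Ind u by rewrite u0 inE.
by rewrite inE lt0n negbK => /eqP.
Qed.

Lemma Ind_wmul u v : Ind (wmul u v) = Ind u :|: Ind v.
Proof. by apply/setP=> i; rewrite !inE ffunE addn_gt0. Qed.

Lemma Ind_xvar (i : 'I_n) : Ind (xvar i) = [set i].
Proof. by apply/setP=> j; rewrite !inE ffunE lt0b. Qed.

Lemma Ind_wstd w : Ind (wstd w) \subset Ind w.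
Proof. by apply/subsetP=> i; rewrite !inE ffunE !lt0n; apply: contra => /eqP->. Qed.

Lemma wdvd_wstd w : wdvd (wstd w) w.
Proof. by apply/forallP=> i; rewrite ffunE leq_mod. Qed.

Lemma wstd_id w : wstandard w -> wstd w = w.
Proof. by move=> /forallP w_std; apply/ffunP=> i; rewrite ffunE modn_small // ltnS. Qed.

Lemma wstandard_wstd w : wstandard (wstd w).
Proof. by apply/forallP=> i; rewrite ffunE -ltnS ltn_mod. Qed.

Definition wof c : word n := [ffun i => nat_of_bool (c ord0 i != 0%R)].

Lemma psi_wof c : psi (wof c) = c.
Proof.
by apply/rowP=> i; rewrite !mxE ffunE; case: (c ord0 i) => [[|[|]]] //= ?; apply: val_inj.
Qed.

Lemma wof_psi w : wstandard w -> wof (psi w) = w.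
Proof.
by move=> /forallP w_std; apply/ffunP=> i; rewrite !ffunE mxE; case: (w i) (w_std i) => [|[]].
Qed.

Lemma psi_wmul u v : psi (wmul u v) = (psi u + psi v)%R.
Proof. by apply/rowP=> i; rewrite !mxE ffunE natrD. Qed.

Lemma psi_wstd w : psi (wstd w) = psi w.
Proof. by apply/rowP=> i; rewrite !mxE ffunE Fp_nat_mod. Qed.

Lemma psi_wone : psi (wone n) = 0%R.
Proof. by apply/rowP=> i; rewrite !mxE ffunE. Qed.

Variables (m : nat) (M : 'M['F_2]_(n, m)).

Lemma syndrome_wmul u v : syndrome M (wmul u v) = (syndrome M u + syndrome M v)%R.
Proof. by rewrite /syndrome psi_wmul mulmxDl. Qed.

Lemma syndrome_wstd w : syndrome M (wstd w) = syndrome M w.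
Proof. by rewrite /syndrome psi_wstd. Qed.

Lemma syndrome_wone : syndrome M (wone n) = 0%R.
Proof. by rewrite /syndrome psi_wone mul0mx. Qed.

End Words.

Section ErrorVectorOrder.
Variables (n : nat) (lt : word n -> word n -> bool).
Hypothesis lt_adm : admissible lt.
Implicit Types (s u v w : word n).

Lemma lt_irr u : ~~ lt u u.
Proof. by case: lt_adm. Qed.

Lemma lt_trans u v w : lt u v -> lt v w -> lt u w.
Proof. by case: lt_adm => _ lt_tr _ _ _; apply: lt_tr. Qed.

Lemma lt_wone w : w != wone n -> lt (wone n) w.
Proof. by case: lt_adm => _ _ _ lt1 _; apply: lt1. Qed.

Lemma lt_wmul2r s u w : lt u w -> lt (wmul u s) (wmul w s).
Proof. by case: lt_adm => _ _ _ _ lt_mul; apply: lt_mul. Qed.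

Lemma lt_wmulr u s : s != wone n -> lt u (wmul u s).
Proof. by move=> s1; have := lt_wmul2r u (lt_wone s1); rewrite wmul1w wmulC. Qed.

Lemma lt_wdvd u w : wdvd u w -> u = w \/ lt u w.
Proof.
move=> /wdvdP[s ->]; have [->|s1] := eqVneq s (wone n); first by left; rewrite wmulw1.
by right; apply: lt_wmulr.
Qed.

Lemma evlt_irr u : ~~ evlt lt u u.
Proof. by rewrite /evlt ltnn eqxx lt_irr. Qed.

Lemma evlt_trans u v w : evlt lt u v -> evlt lt v w -> evlt lt u w.
Proof.
rewrite /evlt => /orP[uv|/andP[/eqP Iuv uv]] /orP[vw|/andP[/eqP Ivw vw]].
- by rewrite (ltn_trans uv vw).
- by rewrite -Ivw uv.
- by rewrite Iuv vw.
- by rewrite Iuv Ivw eqxx (lt_trans uv vw) orbT.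
Qed.

Lemma evlt_wone u : ~~ evlt lt u (wone n).
Proof.
rewrite /evlt Ind_wone cards0 ltn0 /=; apply/andP=> [[/eqP/cards0_eq/Ind_eq0-> ]].
exact/negP/lt_irr.
Qed.

Lemma evlt_wmulx w i : evlt lt w (wmul w (xvar i)).
Proof.
rewrite /evlt Ind_wmul Ind_xvar; have [iw|iNw] := boolP (i \in Ind w).
  have x1 : xvar i != wone n by apply/eqP=> /ffunP/(_ i); rewrite !ffunE eqxx.
  by rewrite (setUidPl _) ?sub1set // ltnn eqxx lt_wmulr.
by rewrite setUC cardsU1 iNw ltnSn.
Qed.

(* Standardizing only shrinks the support and moves down in [lt]. *)
Lemma evlt_wstd_wmul u v s : wstandard (wmul u s) -> evlt lt v u ->
  evlt lt (wstd (wmul v s)) (wmul u s).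
Proof.
move=> us_std; set x := wstd _.
have Ind_x : (#|Ind x| <= #|Ind v| + #|Ind s|)%N.
  apply: leq_trans (subset_leq_card (Ind_wstd _)) _.
  by rewrite Ind_wmul cardsU leq_subr.
have Ind_us : #|Ind (wmul u s)| = (#|Ind u| + #|Ind s|)%N.
  rewrite Ind_wmul cardsU; suff -> : Ind u :&: Ind s = set0 by rewrite cards0 subn0.
  apply/setP=> i; rewrite !inE; move/forallP: us_std => /(_ i); rewrite ffunE.
  by case: (u i) => [|[|]] //=; case: (s i).
have lt_x : lt v u -> lt x (wmul u s).
  move=> vu; have vs_us := lt_wmul2r s vu; rewrite /x.
  case: (lt_wdvd (wdvd_wstd (wmul v s))) => [->|x_vs] //; exact: lt_trans x_vs vs_us.
rewrite /evlt => /orP[vu|/andP[/eqP Ivu vu]].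
  by rewrite Ind_us (leq_ltn_trans Ind_x) // ltn_add2r.
by move: Ind_x; rewrite Ivu -Ind_us leq_eqVlt => /orP[->|->]; rewrite ?lt_x ?orbT.
Qed.

(* Standard words below [u], encoded by their rows: the measure for induction
   along reductions. *)
Definition evrank u := #|[set c : 'rV['F_2]_n | evlt lt (wof c) u]|.

Lemma evrank_lt x u : wstandard x -> evlt lt x u -> (evrank x < evrank u)%N.
Proof.
move=> x_std xu; apply: proper_card; apply/properP; split.
  by apply/subsetP=> c; rewrite !inE => /evlt_trans; apply.
by exists (psi x); rewrite !inE wof_psi // evlt_irr.
Qed.

End ErrorVectorOrder.

Section AlgorithmR.
Variables (n m : nat) (H : 'M['F_2]_(n, m)) (lt : word n -> word n -> bool).
Hypothesis lt_adm : admissible lt.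
Local Notation syn := (syndrome H).
Local Notation runR := (clos_refl_trans _ (stepR H lt)).

Definition algR_invariant (st : stateR n) : Prop :=
  let: (L, N, G) := st in
  [/\ syndrome_balanced H G, forall b, b \in G -> evlt lt b.2 b.1,
      forall x y, x \in N -> y \in L -> evlt lt x y & uniq (map syn N)].

Lemma algR_invariant_step st st' :
  stepR H lt st st' -> algR_invariant st -> algR_invariant st'.
Proof.
case: st => [[L N] G]; case: st' => [[L' N'] G'] /=.
move=> [w [wL w_min step]] [balG leadG NL uniqN].
have L0P y : y \in [seq v <- L | v != w] -> y \in L by rewrite mem_filter => /andP[].
move: step; case: ifP => _.
  by case=> -> -> ->; split=> // x y xN /L0P; apply: NL.
case: ifP => synN.
  move=> [w' [w'N syn_w'] [-> -> ->]]; split=> //.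
  - by move=> b; rewrite mem_rcons in_cons => /orP[/eqP->|/balG].
  - by move=> b; rewrite mem_rcons in_cons => /orP[/eqP->|/leadG] //; apply: NL.
  - by move=> x y xN /L0P; apply: NL.
case=> -> -> ->; split=> //.
- move=> x y; rewrite mem_rcons in_cons mem_cat => /orP[/eqP->|xN] /orP[].
  + by rewrite mem_filter => /andP[yw yL]; apply: w_min.
  + by move=> /mapP[i _ ->]; apply: evlt_wmulx.
  + by move=> /L0P; apply: NL.
  + by move=> /mapP[i _ ->]; apply: evlt_trans (NL _ _ xN wL) (evlt_wmulx _ _ _).
- rewrite map_rcons rcons_uniq uniqN andbT; apply/mapP=> [[x xN syn_x]].
  by move/negP: synN; apply; apply/hasP; exists x; rewrite // syn_x.
Qed.

Lemma algR_invariant_run st st' : runR st st' -> algR_invariant st -> algR_invariant st'.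
Proof. by elim=> [x y /algR_invariant_step| | x y z _ IH1 _ IH2] // inv; auto. Qed.

Lemma stepR_mono st st' : stepR H lt st st' ->
  {subset st.1.2 <= st'.1.2} /\ {subset st.2 <= st'.2}.
Proof.
case: st => [[L N] G]; case: st' => [[L' N'] G'] /=.
have sub_rcons (T : eqType) (s : seq T) x : {subset s <= rcons s x}.
  by move=> y; rewrite mem_rcons in_cons orbC => ->.
move=> [w [_ _ +]]; case: ifP => _; first by case=> _ -> ->; split.
by case: ifP => _ => [[w' _ [_ -> ->]]|[_ -> ->]]; split=> //; apply: sub_rcons.
Qed.

Lemma runR_mono st st' : runR st st' ->
  {subset st.1.2 <= st'.1.2} /\ {subset st.2 <= st'.2}.
Proof.
elim=> [x y|x|x y z _ [xyN xyG] _ [yzN yzG]]; [exact: stepR_mono | by split |].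
by split=> a ha; [apply/yzN/xyN | apply/yzG/xyG].
Qed.

Definition covered (N : seq (word n)) (G : seq (binom n)) (w : word n) :=
  w \in N \/ exists2 b, b \in G & wdvd b.1 w.

Lemma run_covered Nf Gf st : clos_refl_trans_1n _ (stepR H lt) st ([::], Nf, Gf) ->
  (forall w, w \in st.1.1 -> covered Nf Gf w) /\
  (forall w, w \in Nf -> w \notin st.1.2 -> forall i, covered Nf Gf (wmul w (xvar i))).
Proof.
move Efin : ([::], Nf, Gf) => fin run; elim: run Efin => [_ <-|]; first by split=> // w ->.
move=> [[L N] G] [[L' N'] G'] fin' step run' IH Efin; have [coverL' coverN'] := IH Efin.
have [subN subG] := runR_mono (clos_rt1n_rt _ _ _ _ run'); rewrite -Efin /= in subN subG.
move: step => [w [wL _]] /=.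
have L0P y : y \in L -> y != w -> y \in [seq v <- L | v != w].
  by move=> yL yw; rewrite mem_filter yw.
case: ifP => divG.
  case=> eL eN eG; subst L' N' G'; split=> // y yL.
  have [->|yw] := eqVneq y w; last exact/coverL'/L0P.
  by right; have [b bG b_w] := hasP divG; exists b => //; apply: subG.
case: ifP => _.
  move=> [w' _ [eL eN eG]]; subst L' N' G'; split=> // y yL.
  have [->|yw] := eqVneq y w; last exact/coverL'/L0P.
  by right; exists (w, w'); [apply: subG; rewrite mem_rcons mem_head | apply: wdvd_refl].
case=> eL eN eG; subst L' N' G'.
split=> [y yL|x xNf xN i].
  have [->|yw] := eqVneq y w; last by apply: coverL'; rewrite mem_cat L0P.
  by left; apply: subN; rewrite mem_rcons mem_head.
have [xNw|xNw] := boolP (x \in rcons N w); last exact: coverN'.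
move: xNw; rewrite mem_rcons in_cons (negbTE xN) orbF => /eqP->.
by apply: coverL'; rewrite mem_cat; apply/orP; right; apply/map_f; rewrite mem_enum.
Qed.

Section Output.
Variables (N : seq (word n)) (G : seq (binom n)).
Hypothesis out : algR_output H lt N G.

Lemma algR_output_invariant : algR_invariant ([::], N, G).
Proof. by apply: algR_invariant_run out _; split. Qed.

Lemma algR_output_balanced : syndrome_balanced H G.
Proof. by case: algR_output_invariant. Qed.

Lemma algR_output_lead b : b \in G -> evlt lt b.2 b.1.
Proof. by case: algR_output_invariant => _ leadG _ _; apply: leadG. Qed.

Lemma algR_output_uniq : uniq (map syn N).
Proof. by case: algR_output_invariant. Qed.

(* Induction on the support: [w = w0 x_i] with [w0] in [N], and the successors
   of the words of [N] are covered. *)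
Lemma algR_output_complete w :
  wstandard w -> (forall b, b \in G -> ~~ wdvd b.1 w) -> w \in N.
Proof.
have [cover_init cover_succ] := run_covered (clos_rt_rt1n _ _ _ _ out).
have [k] := ubnP #|Ind w|; elim: k w => // k IH w Ind_w w_std w_ndvd.
have covered_mem x : wdvd x w -> covered N G x -> x \in N.
  move=> xw [//|[b bG bx]].
  by have := w_ndvd b bG; rewrite (wdvd_trans bx xw).
have [/Ind_eq0 w1|/set0Pn[i iw]] := eqVneq (Ind w) set0.
  by apply: covered_mem (wdvd_refl w) (cover_init _ _); rewrite w1 mem_head.
pose w0 : word n := [ffun j => if j == i then 0%N else w j].
have w0_xi : wmul w0 (xvar i) = w.
  apply/ffunP=> j; rewrite !ffunE; case: eqP => [->|]; last by rewrite addn0.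
  by move: iw (forallP w_std i); rewrite inE; case: (w i) => [|[]].
have w0_w : wdvd w0 w by apply/wdvdP; exists (xvar i).
have w0N : w0 \in N.
  apply: IH => [||b bG]; last by apply: contra (w_ndvd b bG) => /wdvd_trans; apply.
  - rewrite -ltnS (leq_trans _ Ind_w) // ltnS proper_card //; apply/properP.
    split; last by exists i => //; rewrite inE ffunE eqxx.
    by apply/subsetP=> j; rewrite !inE ffunE; case: eqP.
  - by apply/forallP=> j; rewrite ffunE; case: eqP => // _; apply: (forallP w_std).
rewrite -w0_xi; apply: covered_mem (cover_succ _ w0N _ i) => //.
by rewrite w0_xi wdvd_refl.
Qed.

End Output.
End AlgorithmR.

Section Reduction.
Variable n : nat.
Implicit Types (B : seq (binom n)) (b : binom n) (w x y : word n).
Local Notation red B := (clos_refl_trans _ (red1 B)).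

Lemma red_syndrome_eq m (M : 'M['F_2]_(n, m)) B x y :
  syndrome_balanced M B -> red B x y -> syndrome M x = syndrome M y.
Proof.
move=> balB; elim=> {x y} [x y [[_ ->]|[_ [b bB [s [-> ->]]]]]| // | x y z _ -> _ -> //].
  by rewrite syndrome_wstd.
by rewrite !syndrome_wmul balB.
Qed.

Lemma syndrome_eq_of_rtz m (M : 'M['F_2]_(n, m)) B b :
  syndrome_balanced M B -> reduces_to_zero B b -> syndrome M b.1 = syndrome M b.2.
Proof.
by move=> balB [w [b1w b2w _]]; rewrite (red_syndrome_eq balB b1w) (red_syndrome_eq balB b2w).
Qed.

Lemma red1_eq_mem B1 B2 x y : B1 =i B2 -> red1 B1 x y -> red1 B2 x y.
Proof.
move=> eB [x_std|[x_std [b bB1 xy]]]; first by left.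
by right; split=> //; exists b; first rewrite -eB.
Qed.

Lemma red_eq_mem B1 B2 x y : B1 =i B2 -> red B1 x y -> red B2 x y.
Proof.
move=> eB; elim=> {x y} [x y /(red1_eq_mem eB)|x|x y z _ xy _ yz]; first exact: rt_step.
- exact: rt_refl.
- exact: rt_trans xy yz.
Qed.

Lemma rtz_eq_mem B1 B2 b : B1 =i B2 -> reduces_to_zero B1 b -> reduces_to_zero B2 b.
Proof.
move=> eB [w [b1w b2w w_irr]]; exists w; split; [exact: red_eq_mem b1w | exact: red_eq_mem b2w |].
by move=> w' /(red1_eq_mem (fun b => esym (eB b))); apply: w_irr.
Qed.

End Reduction.

Section ReductionModuloOutput.
Variables (n m : nat) (H : 'M['F_2]_(n, m)) (lt : word n -> word n -> bool).
Hypothesis lt_adm : admissible lt.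
Variables (N : seq (word n)) (G : seq (binom n)).
Hypothesis out : algR_output H lt N G.
Implicit Types (b : binom n) (s u w : word n).
Local Notation red := (clos_refl_trans _ (red1 G)).

Lemma red1_lead b s : b \in G -> wstandard (wmul b.1 s) -> red1 G (wmul b.1 s) (wmul b.2 s).
Proof. by move=> bG bs_std; right; split=> //; exists b => //; exists s. Qed.

Lemma red_wstd u : red u (wstd u).
Proof.
have [u_std|u_nstd] := boolP (wstandard u); first by rewrite wstd_id //; apply: rt_refl.
by apply: rt_step; left.
Qed.

(* Each step either standardizes or, by [evlt_wstd_wmul], lowers the [evrank]
   of the standard form. *)
Lemma red_to_irreducible u : exists2 w, red u w & irreducible G w.
Proof.
suff std_case v : wstandard v -> exists2 w, red v w & irreducible G w.
  have [w uw w_irr] := std_case _ (wstandard_wstd u).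
  by exists w => //; apply: rt_trans (red_wstd u) uw.
have [k] := ubnP (evrank lt v); elim: k v => // k IH v v_rank v_std.
have [/hasP[b bG /wdvdP[s v_bs]]|ndvdG] := boolP (has (fun b => wdvd b.1 v) G); last first.
  exists v; first exact: rt_refl.
  move=> v' [[/negP //]|[_ [b bG [s [v_bs _]]]]].
  by move/hasP: ndvdG; apply; exists b => //; apply/wdvdP; exists s.
set t := wstd (wmul b.2 s).
have vt : red v t.
  rewrite v_bs; apply: rt_trans (rt_step _ _ _ _ (red1_lead bG _)) (red_wstd _).
  by rewrite -v_bs.
have tv : evlt lt t v.
  by rewrite v_bs evlt_wstd_wmul -?v_bs // (algR_output_lead lt_adm out).
have [w tw w_irr] := IH t (leq_trans (evrank_lt lt_adm (wstandard_wstd _) tv) (ltnSE v_rank))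
  (wstandard_wstd _).
by exists w => //; apply: rt_trans vt tw.
Qed.

Lemma irreducible_mem_output w : irreducible G w -> w \in N.
Proof.
move=> w_irr; have w_std : wstandard w.
  by apply/negPn/negP => w_nstd; apply: (w_irr (wstd w)); left.
apply: (algR_output_complete out w_std) => b bG; apply/negP => /wdvdP[s w_bs].
by apply: (w_irr (wmul b.2 s)); rewrite w_bs; apply: red1_lead; rewrite -?w_bs.
Qed.

Lemma irreducible_wone : irreducible G (wone n).
Proof.
move=> w' [[/negP []]|[_ [b bG [s [b1s _]]]]]; first by apply/forallP=> i; rewrite ffunE.
have /wdvdw1 b1 : wdvd b.1 (wone n) by apply/wdvdP; exists s.
by have := algR_output_lead lt_adm out bG; rewrite b1 (negbTE (evlt_wone lt_adm _)).
Qed.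

(* Normal forms lie in [N], whose syndromes are pairwise distinct. *)
Lemma red_normal_form_eq u w u' w' : red u w -> irreducible G w ->
  red u' w' -> irreducible G w' -> syndrome H u = syndrome H u' -> w = w'.
Proof.
move=> uw w_irr u'w' w'_irr syn_u.
have balG := algR_output_balanced lt_adm out.
apply: (uniq_map_inj_in (algR_output_uniq lt_adm out)); try exact: irreducible_mem_output.
by rewrite -(red_syndrome_eq balG uw) -(red_syndrome_eq balG u'w').
Qed.

Lemma rtz_of_syndrome_eq b : syndrome H b.1 = syndrome H b.2 -> reduces_to_zero G b.
Proof.
move=> syn_b; have [w1 bw1 w1_irr] := red_to_irreducible b.1.
have [w2 bw2 w2_irr] := red_to_irreducible b.2.
exists w1; split=> //.
by rewrite (red_normal_form_eq bw1 w1_irr bw2 w2_irr syn_b).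
Qed.

Lemma codeword_red_wone c : c \in code H -> red (wof c) (wone n).
Proof.
rewrite inE => /eqP cH; have [w cw w_irr] := red_to_irreducible (wof c).
suff <- : w = wone n by [].
apply: (red_normal_form_eq cw w_irr (rt_refl _ _ _) irreducible_wone).
by rewrite syndrome_wone /syndrome psi_wof cH.
Qed.

End ReductionModuloOutput.

Section Permutation.
Variables (n : nat) (p : {perm 'I_n}).
Implicit Types (B : seq (binom n)) (b : binom n) (s u v w x y : word n).
Local Notation sp := (wperm p).

Lemma wpermK : cancel sp (wperm p^-1).
Proof. by move=> w; apply/ffunP=> j; rewrite !ffunE invgK permK. Qed.

Lemma wpermKV : cancel (wperm p^-1) sp.
Proof. by move=> w; apply/ffunP=> j; rewrite !ffunE invgK permKV. Qed.

Lemma wperm_inj : injective sp.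
Proof. exact: can_inj wpermK. Qed.

Lemma bpermK : cancel (bperm p) (bperm p^-1).
Proof. by case=> u v; rewrite /bperm /= !wpermK. Qed.

Lemma wperm_wmul u v : sp (wmul u v) = wmul (sp u) (sp v).
Proof. by apply/ffunP=> j; rewrite !ffunE. Qed.

Lemma wperm_wone : sp (wone n) = wone n.
Proof. by apply/ffunP=> j; rewrite !ffunE. Qed.

Lemma wperm_xvar i : sp (xvar i) = xvar (p i).
Proof. by apply/ffunP=> j; rewrite !ffunE -(inj_eq (@perm_inj _ p)) permKV. Qed.

Lemma wperm_wstd w : sp (wstd w) = wstd (sp w).
Proof. by apply/ffunP=> j; rewrite !ffunE. Qed.

Lemma forall_perm (P : pred 'I_n) : [forall j, P (p^-1%g j)] = [forall i, P i].
Proof. by apply/forallP/forallP => P_all i //; rewrite -(permK p i) P_all. Qed.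

Lemma wdvd_wperm u v : wdvd (sp u) (sp v) = wdvd u v.
Proof.
by rewrite /wdvd -(forall_perm (fun i => u i <= v i)%N); apply: eq_forallb => j; rewrite !ffunE.
Qed.

Lemma wstandard_wperm w : wstandard (sp w) = wstandard w.
Proof.
by rewrite /wstandard -(forall_perm (fun i => w i <= 1)%N); apply: eq_forallb => j; rewrite !ffunE.
Qed.

Lemma card_Ind_wperm w : #|Ind (sp w)| = #|Ind w|.
Proof.
suff -> : Ind (sp w) = p @: Ind w by rewrite card_imset //; apply: perm_inj.
apply/setP=> j; rewrite -{2}(permKV p j) mem_imset ?inE ?ffunE //; exact: perm_inj.
Qed.

Lemma psi_wperm w : psi (sp w) = vperm p (psi w).
Proof. by apply/rowP=> j; rewrite !mxE ffunE. Qed.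

Lemma vperm_inj : injective (vperm p).
Proof.
move=> c d /rowP cd; apply/rowP=> i.
by have := cd (p i); rewrite !mxE permK.
Qed.

Lemma codepermKV (C : {set 'rV['F_2]_n}) : codeperm p (codeperm p^-1 C) = C.
Proof.
rewrite /codeperm -imset_comp -[RHS]imset_id; apply: eq_imset => c /=.
by apply/rowP=> j; rewrite !mxE invgK permKV.
Qed.

Definition ltperm (lt : word n -> word n -> bool) u v := lt (wperm p^-1 u) (wperm p^-1 v).

Lemma ltperm_wperm lt u v : ltperm lt (sp u) (sp v) = lt u v.
Proof. by rewrite /ltperm !wpermK. Qed.

Lemma evlt_ltperm lt u v : evlt (ltperm lt) (sp u) (sp v) = evlt lt u v.
Proof. by rewrite /evlt !card_Ind_wperm ltperm_wperm. Qed.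

Lemma mem_filter_neq_wperm L L1 w : L1 =i map sp L ->
  [seq v <- L1 | v != sp w] =i map sp [seq v <- L | v != w].
Proof.
move=> eL x; rewrite mem_filter eL -(mem_filter (predC1 (sp w))) filter_map.
by congr (x \in map sp _); apply: eq_filter => v /=; rewrite (inj_eq wperm_inj).
Qed.

Lemma mem_successors_wperm w : [seq wmul (sp w) (xvar i) | i <- enum 'I_n]
  =i map sp [seq wmul w (xvar i) | i <- enum 'I_n].
Proof.
move=> x; rewrite -map_comp; apply/mapP/mapP => [[i _ ->]|[i _ ->]].
  by exists (p^-1%g i); rewrite ?mem_enum //= wperm_wmul wperm_xvar permKV.
by exists (p i); rewrite ?mem_enum //= wperm_wmul wperm_xvar.
Qed.

Lemma red1_wperm B x y : red1 B x y -> red1 (map (bperm p) B) (sp x) (sp y).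
Proof.
case=> [[x_nstd ->]|[x_std [b bB [s [x_bs ->]]]]].
  by left; rewrite wperm_wstd wstandard_wperm.
subst x; right; split; first by rewrite wstandard_wperm.
exists (bperm p b); first exact: map_f.
by exists (sp s); rewrite !wperm_wmul.
Qed.

Lemma red_wperm B x y : clos_refl_trans _ (red1 B) x y ->
  clos_refl_trans _ (red1 (map (bperm p) B)) (sp x) (sp y).
Proof.
elim=> {x y} [x y /red1_wperm|x|x y z _ xy _ yz]; first exact: rt_step.
- exact: rt_refl.
- exact: rt_trans xy yz.
Qed.

End Permutation.

Lemma admissible_ltperm n (p : {perm 'I_n}) lt : admissible lt -> admissible (ltperm p lt).
Proof.
case=> lt_irr lt_tr lt_total lt1 lt_mul; split; rewrite /ltperm.
- by move=> u; apply: lt_irr.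
- by move=> u v w; apply: lt_tr.
- by move=> u w uw; apply: lt_total; rewrite (can_eq (wpermKV p)).
- by move=> w w1; rewrite wperm_wone; apply: lt1; rewrite -(wperm_wone p^-1) (can_eq (wpermKV p)).
- by move=> u w s uw; rewrite !wperm_wmul; apply: lt_mul.
Qed.

Lemma irreducible_wperm n (p : {perm 'I_n}) B w :
  irreducible B w -> irreducible (map (bperm p) B) (wperm p w).
Proof.
by move=> w_irr w' /(red1_wperm p^-1); rewrite (mapK (bpermK p)) wpermK; apply: w_irr.
Qed.

Lemma rtz_bperm n (p : {perm 'I_n}) B b :
  reduces_to_zero B b -> reduces_to_zero (map (bperm p) B) (bperm p b).
Proof.
move=> [w [b1w b2w w_irr]]; exists (wperm p w).
by split; [apply: red_wperm | apply: red_wperm | apply: irreducible_wperm].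
Qed.

Section Transport.
Variables (n m m' : nat) (H : 'M['F_2]_(n, m)) (H' : 'M['F_2]_(n, m')).
Variables (p : {perm 'I_n}) (lt : word n -> word n -> bool).
Hypothesis code_H' : code H' = codeperm p (code H).
Implicit Types (s u v w x y : word n).
Local Notation sp := (wperm p).

Lemma syndrome_wperm_eq x y :
  (syndrome H' (sp x) == syndrome H' (sp y)) = (syndrome H x == syndrome H y).
Proof.
have syn_eq M' u v : (syndrome M' u == syndrome M' v) = ((psi u - psi v)%R \in code M').
  by rewrite inE /syndrome mulmxBl subr_eq0.
have vpermB c d : vperm p (c - d)%R = (vperm p c - vperm p d)%R by apply/rowP=> j; rewrite !mxE.
by rewrite !syn_eq !psi_wperm -vpermB code_H' mem_imset //; apply: vperm_inj.
Qed.

(* The run for [C' = sigma C] mirrors the run for [C]; the lists [L] agree only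
   as sets, since the successors [w x_i] are enumerated in a different order. *)
Definition mirrors (t st : stateR n) :=
  [/\ t.1.1 =i map sp st.1.1, t.1.2 = map sp st.1.2 & t.2 = map (bperm p) st.2].

Lemma mirrors_step st st' t : stepR H lt st st' -> mirrors t st ->
  exists2 t', stepR H' (ltperm p lt) t t' & mirrors t' st'.
Proof.
case: st => [[L N] G]; case: st' => [[L' N'] G']; case: t => [[L1 N1] G1] /=.
move=> [w [wL w_min step]] [/= eL -> ->].
have divG : has (fun b : binom n => wdvd b.1 (sp w)) (map (bperm p) G)
          = has (fun b : binom n => wdvd b.1 w) G.
  by rewrite has_map; apply: eq_has => b /=; apply: wdvd_wperm.
have synN : has (fun w' => syndrome H' w' == syndrome H' (sp w)) (map sp N)
          = has (fun w' => syndrome H w' == syndrome H w) N.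
  by rewrite has_map; apply: eq_has => y /=; apply: syndrome_wperm_eq.
have wL1 : sp w \in L1 by rewrite eL map_f.
have w_min' v : v \in L1 -> v != sp w -> evlt (ltperm p lt) (sp w) v.
  by rewrite eL => /mapP[y yL ->]; rewrite (inj_eq (@wperm_inj _ p)) evlt_ltperm; apply: w_min.
move: step; rewrite -divG -synN; case: ifP => divG'.
  case=> -> -> ->; exists ([seq v <- L1 | v != sp w], map sp N, map (bperm p) G).
    by exists (sp w); split=> //=; rewrite divG'.
  by split=> //; apply: mem_filter_neq_wperm.
case: ifP => synN'.
  move=> [w' [w'N syn_w'] [-> -> ->]].
  exists ([seq v <- L1 | v != sp w], map sp N, rcons (map (bperm p) G) (sp w, sp w')).
    exists (sp w); split=> //=; rewrite divG' synN'.
    by exists (sp w'); split; [apply: map_f | apply/eqP; rewrite syndrome_wperm_eq syn_w'].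
  by split=> /=; [apply: mem_filter_neq_wperm | | rewrite map_rcons].
case=> -> -> ->; exists ([seq v <- L1 | v != sp w] ++ [seq wmul (sp w) (xvar i) | i <- enum 'I_n],
                         rcons (map sp N) (sp w), map (bperm p) G).
  by exists (sp w); split=> //=; rewrite divG' synN'.
by split=> //= [x|]; rewrite ?map_cat ?mem_cat ?(mem_filter_neq_wperm w eL) ?mem_successors_wperm
  ?map_rcons.
Qed.

Lemma mirrors_run st st' t : clos_refl_trans _ (stepR H lt) st st' -> mirrors t st ->
  exists2 t', clos_refl_trans _ (stepR H' (ltperm p lt)) t t' & mirrors t' st'.
Proof.
move=> run; elim: run t => {st st'} [st st' step|st|st st1 st' _ IH1 _ IH2] t t_st.
- by have [t' ? ?] := mirrors_step step t_st; exists t'; first exact: rt_step.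
- by exists t; first exact: rt_refl.
- have [t1 tt1 t1_st1] := IH1 t t_st; have [t' t1t' t'_st'] := IH2 t1 t1_st1.
  by exists t'; first exact: rt_trans tt1 t1t'.
Qed.

Lemma algR_output_wperm N G : algR_output H lt N G ->
  algR_output H' (ltperm p lt) (map sp N) (map (bperm p) G).
Proof.
move=> out; have init : mirrors ([:: wone n], [::], [::]) ([:: wone n], [::], [::]).
  by split=> //= x; rewrite wperm_wone.
have [[[L1 N1] G1] run [/= eL eN eG]] := mirrors_run out init.
suff L1_nil : L1 = [::] by rewrite L1_nil eN eG in run.
by case: L1 eL {run} => // x L1 /(_ x); rewrite mem_head.
Qed.

End Transport.

Lemma codeperm_subset n m m' (H : 'M['F_2]_(n, m)) (H' : 'M['F_2]_(n, m'))
    (p : {perm 'I_n}) lt N G :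
  admissible lt -> algR_output H lt N G -> syndrome_balanced H' (map (bperm p) G) ->
  codeperm p (code H) \subset code H'.
Proof.
move=> lt_adm out balG'; apply/subsetP=> _ /imsetP[c cH ->].
have c1 := red_wperm p (codeword_red_wone lt_adm out cH).
have := red_syndrome_eq balG' c1; rewrite wperm_wone syndrome_wone.
by rewrite inE /syndrome psi_wperm psi_wof => ->.
Qed.

Theorem theorem4p2 (n m m' : nat) (H : 'M['F_2]_(n, m)) (H' : 'M['F_2]_(n, m'))
  (s : {perm 'I_n}) (lt lt' : word n -> word n -> bool)
  (G G' : seq (binom n)) :
  admissible lt -> reduced_basis H lt G ->
  admissible lt' -> reduced_basis H' lt' G' ->
  let Gstar := map (bperm s) G in
  [<-> code H' = codeperm s (code H);
       exists lt'' : word n -> word n -> bool,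
         admissible lt'' /\
         exists2 G0, reduced_basis H' lt'' G0 & G0 =i Gstar;
       (forall b, b \in Gstar -> reduces_to_zero G' b) /\
       (forall b, b \in G' -> reduces_to_zero Gstar b)].
Proof.
move=> lt_adm [N out] lt'_adm [N' out'] Gstar.
have balG := algR_output_balanced lt_adm out.
have balG' := algR_output_balanced lt'_adm out'.
tfae=> [code_H' | [lt'' [lt''_adm [G0 [N0 out0] G0_Gstar]]] | [Gstar_G' G'_Gstar]].
- exists (ltperm s lt); split; first exact: admissible_ltperm.
  exists Gstar; last by [].
  by exists (map (wperm s) N); exact: (algR_output_wperm code_H' out).
- have balG0 := algR_output_balanced lt''_adm out0.
  split=> b bG; first by apply: (rtz_of_syndrome_eq lt'_adm out'); apply: balG0; rewrite G0_Gstar.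
  exact: rtz_eq_mem G0_Gstar (rtz_of_syndrome_eq lt''_adm out0 (balG' b bG)).
- have balGstar : syndrome_balanced H' Gstar.
    by move=> b /Gstar_G'; apply: syndrome_eq_of_rtz balG'.
  have balG'V : syndrome_balanced H (map (bperm s^-1) G').
    move=> _ /mapP[b /G'_Gstar /(rtz_bperm s^-1) b0 ->]; apply: syndrome_eq_of_rtz b0.
    by rewrite (mapK (bpermK s)).
  apply/eqP; rewrite eqEsubset (codeperm_subset lt_adm out balGstar) andbT.
  rewrite -{1}(codepermKV s (code H')) imsetS //.
  exact: codeperm_subset lt'_adm out' balG'V.
Qed.
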